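(* Let $S=\{p_1,\dots,p_n\}\subset\mathbb{R}^d$ and let $W\in\mathbb{R}^{n\times n}$ be its Gaussian affinity matrix, $W_{i,j}=\exp(-\|p_i-p_j\|^2/\sigma)$. Assume the sparsity assumption and the bounded doubling dimension assumption (with doubling dimension $d_0$) hold. Let $C_i=\|W_{:,i}\|^2$ be the squared Euclidean norm of the $i$-th column of $W$, $C_{\max}=\max_i C_i$ and $C_{\min}=\min_i C_i$. Then $$\frac{C_{\max}}{C_{\min}}\le (\log n)^{O(d_0)}.$$
   Context: $\sigma>0$ is a fixed user parameter (a distance threshold), treated as a constant. Sparsity assumption: for all $i\ne j$, $\|p_i-p_j\|\ge 0.1\,\sigma/\log n$. Bounded doubling dimension assumption: there is a constant $d_0$ such that for every $r>0$ and $\epsilon>0$, any ball of radius $r$ contains at most $O((r/\epsilon)^{d_0})$ points of $S$ that are pairwise at distance at least $\epsilon$. The constant in the exponent $O(d_0)$ depends only on the constants in these assumptions. *)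

From Stdlib Require Import Reals List.
Import ListNotations.
Open Scope R_scope.

Fixpoint rsum (f : nat -> R) (n : nat) : R :=
  match n with
  | O => 0
  | S m => rsum f m + f m
  end.

(* A point of R^d is a function nat -> R whose coordinates 0..d-1 matter. *)
Definition pt := nat -> R.

Definition dist2 (d : nat) (x y : pt) : R :=
  rsum (fun k => (x k - y k) ^ 2) d.

Definition dist (d : nat) (x y : pt) : R := sqrt (dist2 d x y).

Definition W (sigma : R) (d : nat) (p : nat -> pt) (i j : nat) : R :=
  exp (- dist2 d (p i) (p j) / sigma).

Definition Ccol (sigma : R) (d n : nat) (p : nat -> pt) (i : nat) : R :=
  rsum (fun j => (W sigma d p j i) ^ 2) n.

(* max / min over i in {0,...,n-1} (n >= 1) *)
Definition Cmax (sigma : R) (d n : nat) (p : nat -> pt) : R :=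
  fold_right Rmax (Ccol sigma d n p 0%nat) (map (Ccol sigma d n p) (seq 0 n)).
Definition Cmin (sigma : R) (d n : nat) (p : nat -> pt) : R :=
  fold_right Rmin (Ccol sigma d n p 0%nat) (map (Ccol sigma d n p) (seq 0 n)).

Definition sparse (sigma : R) (d n : nat) (p : nat -> pt) : Prop :=
  forall i j, (i < n)%nat -> (j < n)%nat -> i <> j ->
    dist d (p i) (p j) >= (1/10) * sigma / ln (INR n).

Definition doubling (K d0 : R) (d n : nat) (p : nat -> pt) : Prop :=
  forall (x : pt) (r eps : R) (A : list nat),
    0 < eps -> eps <= r ->
    NoDup A ->
    (forall i, In i A -> (i < n)%nat /\ dist d (p i) x <= r) ->
    (forall i j, In i A -> In j A -> i <> j -> dist d (p i) (p j) >= eps) ->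
    INR (length A) <= K * Rpower (r / eps) d0.

From Pilot Require Import Defs.
From Stdlib Require Import Reals List Lra Lia.
Open Scope R_scope.

(* Every column norm is at least 1, the contribution of the diagonal entry.
   For an upper bound on column i take r = ln n: a point farther than r from
   p_i contributes at most exp(-r) = 1/n (once sigma <= 2 r), so all far points
   together contribute at most 1, while the points within distance r are
   (sigma / (10 r))-separated by sparsity, hence by the doubling property there
   are at most K (10 r^2 / sigma)^d0 <= K r^(3 d0) of them.  For n large this is
   below (ln n)^(4 d0). *)

Lemma exp_le_compat (x y : R) : x <= y -> exp x <= exp y.
Proof.
  intros Hxy; destruct (Rle_lt_or_eq_dec _ _ Hxy) as [Hlt | ->].
  - left; now apply exp_increasing.
  - lra.
Qed.

Lemma Rdiv_le_of_ge1 (a b B : R) : a <= B -> 0 <= B -> 1 <= b -> a / b <= B.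
Proof.
  intros HaB HB Hb; unfold Rdiv.
  assert (Hinv : 0 < / b <= 1).
  { split; [apply Rinv_0_lt_compat; lra|].
    rewrite <- Rinv_1; apply Rinv_le_contravar; lra. }
  destruct (Rle_or_lt 0 a); nra.
Qed.

Lemma ln_INR_eventually_gt (T : R) :
  exists N : nat, forall n, (N <= n)%nat -> 0 < INR n /\ T < ln (INR n).
Proof.
  destruct (INR_unbounded (exp T)) as [N HN]; exists N; intros n Hn.
  pose proof (le_INR _ _ Hn); pose proof (exp_pos T).
  split; [lra|].
  rewrite <- (ln_exp T) at 1; apply ln_increasing; lra.
Qed.

Lemma Rpower_root_le (a L d0 : R) :
  0 < a -> 0 < d0 -> Rpower a (1 / d0) <= L -> a <= Rpower L d0.
Proof.
  intros Ha Hd0 HL.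
  assert (Hroot : Rpower (Rpower a (1 / d0)) d0 = a).
  { rewrite Rpower_mult; replace (1 / d0 * d0) with 1 by (field; lra).
    now apply Rpower_1. }
  rewrite <- Hroot at 1; apply Rle_Rpower_l; [lra|].
  split; [apply exp_pos | exact HL].
Qed.

Lemma rsum_nonneg (f : nat -> R) (n : nat) :
  (forall j, 0 <= f j) -> 0 <= rsum f n.
Proof. intros Hf; induction n; simpl; [lra | specialize (Hf n); lra]. Qed.

Lemma rsum_term_le (f : nat -> R) (n i : nat) :
  (forall j, 0 <= f j) -> (i < n)%nat -> f i <= rsum f n.
Proof.
  intros Hf; induction n as [|n IHn]; intros Hi; [lia|]; simpl.
  destruct (Nat.eq_dec i n) as [->|Hne].
  - pose proof (rsum_nonneg f n Hf); lra.
  - assert (IH : f i <= rsum f n) by (apply IHn; lia).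
    specialize (Hf n); lra.
Qed.

Lemma rsum_le_compat (f g : nat -> R) (n : nat) :
  (forall j, (j < n)%nat -> f j <= g j) -> rsum f n <= rsum g n.
Proof.
  induction n as [|n IHn]; intros Hfg; simpl; [lra|].
  assert (IH : rsum f n <= rsum g n) by (apply IHn; intros; apply Hfg; lia).
  specialize (Hfg n ltac:(lia)); lra.
Qed.

Lemma rsum_indicator_le (b : nat -> bool) (e : R) (n : nat) : 0 <= e ->
  rsum (fun j => if b j then 1 else e) n
    <= INR (length (filter b (seq 0 n))) + INR n * e.
Proof.
  intros He; induction n as [|n IHn]; [simpl; lra|]; cbn [rsum].
  rewrite seq_S, filter_app, length_app, plus_INR, S_INR; simpl.
  destruct (b n); simpl; lra.
Qed.

Lemma fold_right_Rmax_le (l : list R) (init B : R) :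
  init <= B -> (forall x, In x l -> x <= B) -> fold_right Rmax init l <= B.
Proof.
  induction l as [|a l IHl]; intros Hinit Hl; simpl; [exact Hinit|].
  apply Rmax_lub; [apply Hl; now left | apply IHl; auto; intros; apply Hl; now right].
Qed.

Lemma fold_right_Rmin_ge (l : list R) (init B : R) :
  B <= init -> (forall x, In x l -> B <= x) -> B <= fold_right Rmin init l.
Proof.
  induction l as [|a l IHl]; intros Hinit Hl; simpl; [exact Hinit|].
  apply Rmin_glb; [apply Hl; now left | apply IHl; auto; intros; apply Hl; now right].
Qed.

Lemma Cmax_le (sigma B : R) (d n : nat) (p : nat -> pt) : (0 < n)%nat ->
  (forall i, (i < n)%nat -> Ccol sigma d n p i <= B) -> Cmax sigma d n p <= B.
Proof.
  intros Hn Hcol; apply fold_right_Rmax_le; [now apply Hcol|].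
  intros x Hx; apply in_map_iff in Hx as [i [<- Hi]]; apply in_seq in Hi.
  apply Hcol; lia.
Qed.

Lemma Cmin_ge (sigma B : R) (d n : nat) (p : nat -> pt) : (0 < n)%nat ->
  (forall i, (i < n)%nat -> B <= Ccol sigma d n p i) -> B <= Cmin sigma d n p.
Proof.
  intros Hn Hcol; apply fold_right_Rmin_ge; [now apply Hcol|].
  intros x Hx; apply in_map_iff in Hx as [i [<- Hi]]; apply in_seq in Hi.
  apply Hcol; lia.
Qed.

Lemma dist2_nonneg (d : nat) (x y : pt) : 0 <= dist2 d x y.
Proof. apply rsum_nonneg; intros; apply pow2_ge_0. Qed.

Lemma dist2_same (d : nat) (x : pt) : dist2 d x x = 0.
Proof. unfold dist2; induction d as [|d IHd]; cbn [rsum]; [lra|]; rewrite IHd; ring. Qed.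

Lemma W_sq (sigma : R) (d : nat) (p : nat -> pt) (i j : nat) : 0 < sigma ->
  W sigma d p i j ^ 2 = exp (- (2 * dist2 d (p i) (p j)) / sigma).
Proof. intros Hs; unfold W; simpl; rewrite Rmult_1_r, <- exp_plus; f_equal; field; lra. Qed.

Lemma W_same (sigma : R) (d : nat) (p : nat -> pt) (i : nat) : W sigma d p i i = 1.
Proof.
  unfold W; rewrite dist2_same; replace (- 0 / sigma) with 0 by (unfold Rdiv; ring).
  apply exp_0.
Qed.

Lemma Ccol_ge1 (sigma : R) (d n : nat) (p : nat -> pt) (i : nat) :
  (i < n)%nat -> 1 <= Ccol sigma d n p i.
Proof.
  intros Hi; unfold Ccol.
  replace 1 with (W sigma d p i i ^ 2) by (rewrite W_same; ring).
  apply (rsum_term_le (fun j => W sigma d p j i ^ 2)); [intros; apply pow2_ge_0 | exact Hi].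
Qed.

Definition in_ball (d : nat) (x : pt) (r : R) (y : pt) : bool :=
  if Rle_dec (Defs.dist d y x) r then true else false.

Definition ball_indices (d n : nat) (p : nat -> pt) (x : pt) (r : R) : list nat :=
  filter (fun j => in_ball d x r (p j)) (seq 0 n).

Lemma W_sq_le_ball (sigma r : R) (d : nat) (p : nat -> pt) (i j : nat) :
  0 < sigma -> sigma <= 2 * r ->
  W sigma d p j i ^ 2 <= if in_ball d (p i) r (p j) then 1 else exp (- r).
Proof.
  intros Hs Hsr; rewrite W_sq by exact Hs; unfold in_ball.
  pose proof (dist2_nonneg d (p j) (p i)) as Hd2.
  assert (Hsinv : 0 < / sigma) by (apply Rinv_0_lt_compat; lra).
  assert (Hsinv1 : sigma * / sigma = 1) by (field; lra).
  destruct (Rle_dec (Defs.dist d (p j) (p i)) r) as [Hnear | Hfar].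
  - rewrite <- exp_0; apply exp_le_compat; unfold Rdiv; nra.
  - apply exp_le_compat; apply Rnot_le_lt in Hfar; unfold Defs.dist in Hfar.
    pose proof (sqrt_sqrt _ Hd2) as Hsqrt.
    assert (Hr2 : r * r < dist2 d (p j) (p i)) by nra.
    unfold Rdiv; nra.
Qed.

Lemma Ccol_le_ball_count (sigma r : R) (d n : nat) (p : nat -> pt) (i : nat) :
  0 < sigma -> sigma <= 2 * r ->
  Ccol sigma d n p i <= INR (length (ball_indices d n p (p i) r)) + INR n * exp (- r).
Proof.
  intros Hs Hsr; unfold Ccol.
  eapply Rle_trans; [apply (rsum_le_compat _ (fun j => if in_ball d (p i) r (p j) then 1 else exp (- r)))|].
  - intros j _; now apply W_sq_le_ball.
  - apply rsum_indicator_le; left; apply exp_pos.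
Qed.

Lemma ball_indices_length_le (K d0 r eps : R) (d n : nat) (p : nat -> pt) (x : pt) :
  doubling K d0 d n p -> 0 < eps -> eps <= r ->
  (forall i j, (i < n)%nat -> (j < n)%nat -> i <> j -> Defs.dist d (p i) (p j) >= eps) ->
  INR (length (ball_indices d n p x r)) <= K * Rpower (r / eps) d0.
Proof.
  intros Hdb Heps Hepsr Hsep; apply (Hdb x r eps); auto.
  - apply NoDup_filter, seq_NoDup.
  - intros k Hk; apply filter_In in Hk as [Hk Hball]; apply in_seq in Hk.
    split; [lia|]; unfold in_ball in Hball.
    destruct (Rle_dec (Defs.dist d (p k) x) r); [assumption | discriminate].
  - intros k l Hk Hl Hkl.
    apply filter_In in Hk as [Hk _]; apply filter_In in Hl as [Hl _].
    apply in_seq in Hk; apply in_seq in Hl.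
    apply Hsep; auto; lia.
Qed.

(* With r = L and eps = sigma / (10 L), [r / eps = 10 L^2 / sigma <= L^3]. *)
Lemma polylog_count_le (sigma K d0 L : R) :
  0 < sigma -> 0 < K -> 0 < d0 -> 1 < L -> 10 / sigma <= L -> K + 1 <= Rpower L d0 ->
  K * Rpower (L / (1 / 10 * sigma / L)) d0 + 1 <= Rpower L (4 * d0).
Proof.
  intros Hs HK Hd0 HL H10 HKL.
  assert (Hratio : L / (1 / 10 * sigma / L) <= L ^ 3).
  { replace (L / (1 / 10 * sigma / L)) with (10 / sigma * (L * L)) by (field; lra).
    simpl; nra. }
  assert (Hpow3 : Rpower (L / (1 / 10 * sigma / L)) d0 <= Rpower L (3 * d0)).
  { replace (3 * d0) with (INR 3 * d0) by (simpl; ring).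
    rewrite <- Rpower_mult, Rpower_pow by lra.
    apply Rle_Rpower_l; [lra|]; split; [|exact Hratio].
    apply Rdiv_lt_0_compat; [lra|]; apply Rdiv_lt_0_compat; lra. }
  assert (H1 : 1 <= Rpower L (3 * d0)).
  { rewrite <- (Rpower_O L) by lra; apply Rle_Rpower; lra. }
  replace (4 * d0) with (d0 + 3 * d0) by ring; rewrite Rpower_plus.
  nra.
Qed.

Theorem mainTheorem1 :
  forall (sigma K : R), 0 < sigma -> 0 < K ->
  exists c : R, 0 < c /\
  forall d0 : R, 0 < d0 ->
  exists N : nat,
  forall (n d : nat) (p : nat -> pt),
    (N <= n)%nat ->
    sparse sigma d n p ->
    doubling K d0 d n p ->
    Cmax sigma d n p / Cmin sigma d n p <= Rpower (ln (INR n)) (c * d0).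
Proof.
  intros sigma K Hs HK; exists 4; split; [lra|]; intros d0 Hd0.
  destruct (ln_INR_eventually_gt (1 + sigma + 10 / sigma + Rpower (K + 1) (1 / d0)))
    as [N HN].
  exists N; intros n d p HnN Hsp Hdb.
  destruct (HN n HnN) as [Hn HL]; set (L := ln (INR n)) in *.
  assert (Hn0 : (0 < n)%nat) by (destruct n; simpl in Hn; lra || lia).
  assert (H10 : 0 < 10 / sigma) by (apply Rdiv_lt_0_compat; lra).
  assert (HKroot : 0 < Rpower (K + 1) (1 / d0)) by apply exp_pos.
  assert (HnL : INR n * exp (- L) = 1).
  { unfold L; rewrite exp_Ropp, exp_ln by exact Hn; field; lra. }
  assert (Heps : 0 < 1 / 10 * sigma / L) by (apply Rdiv_lt_0_compat; lra).
  assert (HepsL : 1 / 10 * sigma / L <= L).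
  { apply Rmult_le_reg_r with L; [lra|]; unfold Rdiv; rewrite Rmult_assoc, Rinv_l; nra. }
  assert (Hcol : forall i, (i < n)%nat -> Ccol sigma d n p i <= Rpower L (4 * d0)).
  { intros i Hi.
    eapply Rle_trans; [apply (Ccol_le_ball_count sigma L); lra|]; rewrite HnL.
    eapply Rle_trans; [apply Rplus_le_compat_r, (ball_indices_length_le K d0 L); eauto|].
    apply polylog_count_le; try lra; apply Rpower_root_le; lra. }
  apply Rdiv_le_of_ge1.
  - now apply Cmax_le.
  - left; apply exp_pos.
  - apply Cmin_ge; [exact Hn0|]; intros; now apply Ccol_ge1.
Qed.
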